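(* Let $s,t\in\mathbb N$. If $s>t$ then $\hom_{\Bbbk\mathbf{FA}}(\overline P^{\otimes s},\overline P^{\otimes t})=0$. If $s=t$, the place-permutation action of $\mathfrak S_t$ on $\overline P^{\otimes t}$ induces an isomorphism of $\Bbbk$-algebras $\Bbbk\mathfrak S_t\cong\mathrm{End}_{\Bbbk\mathbf{FA}}(\overline P^{\otimes t})$.
   Context: Let $\Bbbk$ be a field. $\mathbf{FA}$ denotes the category of finite sets and all maps, and $\mathbf{FI}$, $\mathbf{FS}$, $\mathbf{FB}$ its wide subcategories of injections, surjections and bijections respectively; $\mathbf n=\{1,\dots,n\}$ for $n\in\mathbb N$ ($\mathbf 0=\emptyset$), and $\mathfrak S_n$ is the symmetric group. For a category $\mathcal C$, $\Bbbk\mathcal C(X,Y)$ is the $\Bbbk$-vector space with basis $\mathcal C(X,Y)$. A $\Bbbk\mathbf{FA}$-module is a functor from $\mathbf{FA}$ to $\Bbbk$-vector spaces (these form the abelian category $\mathcal F(\mathbf{FA})$); $\otimes$ denotes the pointwise tensor product over $\Bbbk$, and $\hom_{\Bbbk\mathbf{FA}}$ denotes natural transformations. $P^{\mathbf{FA}}_{\mathbf n}:=\Bbbk\mathbf{FA}(\mathbf n,-)$, so $P^{\mathbf{FA}}_{\mathbf n}(X)\cong\Bbbk[X]^{\otimes n}$ (where $\Bbbk[X]$ has basis $\{[x]:x\in X\}$), with the right $\mathfrak S_n$-action by precomposition, equivalently place permutation of tensor factors; write $P^{\mathbf{FA}}:=P^{\mathbf{FA}}_{\mathbf 1}$. Let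 $\overline{\Bbbk}$ be the functor with value $\Bbbk$ on non-empty sets (all maps acting by the identity) and $0$ on $\emptyset$, and $\Bbbk_{\mathbf 0}$ the functor with value $\Bbbk$ on $\emptyset$ and $0$ on non-empty sets. $\overline P$ is the kernel of the surjection $P^{\mathbf{FA}}\to\overline\Bbbk$, $[x]\mapsto 1$; thus $\overline P(X)=\{\sum_x a_x[x]:\sum_x a_x=0\}$. For $n\ge1$, $\overline P^{\otimes n}$ is the $n$-fold pointwise tensor power, a subfunctor of $P^{\mathbf{FA}}_{\mathbf n}$ stable under the place-permutation right action of $\mathfrak S_n$; by convention $\overline P^{\otimes 0}:=\overline\Bbbk$. *)

(* A finite set is a finType; a map of FA is any function between finTypes. *)
From HB Require Import structures.
From mathcomp Require Import all_boot all_order all_algebra.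
From mathcomp Require Import fingroup perm.
Set Implicit Arguments. Unset Strict Implicit. Unset Printing Implicit Defensive.
Import GRing.Theory.
Local Open Scope ring_scope.

Section Defs.
Variable K : fieldType.

(* P^{FA}_s(X) = K[X]^{(x)s}: basis indexed by maps u : s -> X
   (u <-> [u 1] (x) ... (x) [u s]); vectors = coefficient functions. *)
Definition Pt (s : nat) (X : finType) := {ffun {ffun 'I_s -> X} -> K}.

(* functoriality: f : X -> Y sends e_u to e_{f o u} *)
Definition Pmap (s : nat) (X Y : finType) (f : X -> Y) (v : Pt s X) : Pt s Y :=
  [ffun w => \sum_(u : {ffun 'I_s -> X} | [ffun i => f (u i)] == w) v u].

Definition scalev (s : nat) (X : finType) (c : K) (v : Pt s X) : Pt s X :=
  [ffun u => c * v u].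

(* Pbar^{(x)s}(X): the span of pure tensors a_1 (x) ... (x) a_s with each
   a_i in Pbar(X) = {sum_x a_x [x] : sum_x a_x = 0}.  The first conjunct
   implements the convention Pbar^{(x)0} = kbar (zero on the empty set);
   for s >= 1 it is automatic. *)
Definition Pbar (s : nat) (X : finType) (v : Pt s X) : Prop :=
  (#|X| = 0%N -> v = 0) /\
  exists (m : nat) (c : 'I_m -> K) (a : 'I_m -> 'I_s -> {ffun X -> K}),
    (forall j i, \sum_(x : X) a j i x = 0) /\
    v = [ffun u : {ffun 'I_s -> X} => \sum_(j < m) c j * \prod_(i < s) a j i (u i)].

(* a natural transformation Pbar^{(x)s} -> Pbar^{(x)t}, given by maps on the
   ambient spaces whose values outside Pbar^{(x)s} are irrelevant *)
Definition NatTrans (s t : nat) (F : forall X : finType, Pt s X -> Pt t X) : Prop :=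
  (forall X v, Pbar v -> Pbar (F X v)) /\
  (forall X v w, Pbar v -> Pbar w -> F X (v + w) = F X v + F X w) /\
  (forall X (c : K) v, Pbar v -> F X (scalev c v) = scalev c (F X v)) /\
  (forall (X Y : finType) (f : X -> Y) v, Pbar v ->
      F Y (Pmap f v) = Pmap f (F X v)).

(* place permutation: sigma sends e_u to e_{u o sigma} (precomposition).
   With mathcomp's convention (g * h) x = h (g x) this is a homomorphism
   sigma |-> act sigma into End with ordinary composition. *)
Definition act (t : nat) (X : finType) (sigma : {perm 'I_t}) (v : Pt t X) : Pt t X :=
  [ffun w : {ffun 'I_t -> X} => v [ffun i => w ((sigma^-1)%g i)]].

(* group algebra K S_t: coefficient functions, convolution product, unit *)
Definition galg_mul (t : nat) (a b : {ffun {perm 'I_t} -> K}) : {ffun {perm 'I_t} -> K} :=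
  [ffun g => \sum_(h : {perm 'I_t}) \sum_(k : {perm 'I_t})
                if (h * k == g)%g then a h * b k else 0].
Definition galg_one (t : nat) : {ffun {perm 'I_t} -> K} :=
  [ffun g => if g == 1%g then 1 else 0].

Definition Phi (t : nat) (a : {ffun {perm 'I_t} -> K}) (X : finType) (v : Pt t X) : Pt t X :=
  \sum_(sigma : {perm 'I_t}) scalev (a sigma) (act sigma v).

End Defs.

From mathcomp Require Import all_boot all_order all_algebra.
From mathcomp Require Import fingroup perm.
Set Implicit Arguments. Unset Strict Implicit. Unset Printing Implicit Defensive.
Import GRing.Theory.
Local Open Scope ring_scope.

(* On the set S = {*} + s x {+,-}, the tensor g_s = (x)_i ([(i,+)] - [(i,-)])
   lies in Pbar^{(x)s}(S), and every element of Pbar^{(x)s}(Y) is a linear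
   combination of images of g_s under maps S -> Y sending * to a fixed point.
   Hence a natural transformation F out of Pbar^{(x)s} is determined by
   z = F(g_s) in K[S]^{(x)t}.  Naturality forces z to vanish on every basis
   tensor u that avoids some block {(i,+),(i,-)} (collapse (i,+) onto (i,-):
   this kills g_s and fixes u), and to change sign when the two points of a
   block are swapped.  If t < s every u avoids a block, so z = 0.  If t = s,
   the only u meeting every block are the sign tuples over a permutation, so
   z is determined by its values on the tuples ((sigma 1,+),...,(sigma t,+)),
   which are exactly the coefficients of the group algebra element. *)

Section PbarModule.
Variable K : fieldType.
Implicit Types (X Y : finType) (s t : nat).

Lemma sumr_mul_indicator (T : finType) (h : T -> K) (p : T) :
  \sum_(x : T) h x * (x == p)%:R = h p.
Proof.
rewrite (bigD1 p) //= eqxx mulr1 big1 ?addr0 // => x /negbTE ->; by rewrite mulr0.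
Qed.

Lemma sumr_indicator (T : finType) (p : T) : \sum_(x : T) (x == p)%:R = 1 :> K.
Proof.
rewrite -[RHS](sumr_mul_indicator (fun _ => 1) p).
by apply: eq_bigr => x _; rewrite mul1r.
Qed.

Lemma scalevE s X c (v : Pt K s X) u : scalev c v u = c * v u.
Proof. by rewrite ffunE. Qed.

Lemma PmapE s X Y (f : X -> Y) (v : Pt K s X) w :
  Pmap f v w = \sum_(u : {ffun 'I_s -> X} | [ffun i => f (u i)] == w) v u.
Proof. by rewrite ffunE. Qed.

Lemma Pmap0 s X Y (f : X -> Y) : Pmap f (0 : Pt K s X) = 0.
Proof. by apply/ffunP=> w; rewrite !ffunE big1 // => u _; rewrite ffunE. Qed.

Lemma Pmap_tensor s X Y (f : X -> Y) (a : 'I_s -> {ffun X -> K}) :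
  Pmap f [ffun u : {ffun 'I_s -> X} => \prod_(i < s) a i (u i)] =
  [ffun w : {ffun 'I_s -> Y} => \prod_(i < s) \sum_(x : X) (f x == w i)%:R * a i x].
Proof.
apply/ffunP=> w; rewrite !ffunE bigA_distr_bigA /= [LHS]big_mkcond /=.
apply: eq_bigr => u _; rewrite ffunE big_split /=.
case: eqP => [<-|fu_neq_w].
  by rewrite [X in _ = X * _]big1 ?mul1r // => i _; rewrite ffunE eqxx.
have [i fui_neq | fu_eq] := pickP (fun i => f (u i) != w i).
  by rewrite (bigD1 i) //= (negbTE fui_neq) !mul0r.
case: fu_neq_w; apply/ffunP => i; rewrite ffunE; apply/eqP.
exact/negbFE/fu_eq.
Qed.

Lemma Pmap_involutive s X (g : X -> X) (v : Pt K s X) w : involutive g ->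
  Pmap g v w = v [ffun i => g (w i)].
Proof.
move=> gK; rewrite ffunE (big_pred1 [ffun i => g (w i)]) // => u /=.
by apply/eqP/eqP => [<-|->]; apply/ffunP=> i; rewrite !ffunE ?gK.
Qed.

Lemma Pbar0 s X : Pbar (0 : Pt K s X).
Proof.
split=> //; exists 0%N, (fun _ => 0), (fun _ _ => 0); split; first by case.
by apply/ffunP=> u; rewrite !ffunE big_ord0.
Qed.

Lemma PbarD s X (v w : Pt K s X) : Pbar v -> Pbar w -> Pbar (v + w).
Proof.
move=> [v0 [m1 [c1 [a1 [a1_sum0 def_v]]]]] [w0 [m2 [c2 [a2 [a2_sum0 def_w]]]]].
split; first by move=> X0; rewrite v0 // w0 // addr0.
pose glue T (f1 : 'I_m1 -> T) (f2 : 'I_m2 -> T) k :=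
  match split k with inl j => f1 j | inr j => f2 j end.
exists (m1 + m2)%N, (glue _ c1 c2), (glue _ a1 a2); split.
  by move=> k i; rewrite /glue; case: (split k) => j; [apply: a1_sum0 | apply: a2_sum0].
apply/ffunP=> u; rewrite def_v def_w !ffunE big_split_ord /glue /=.
congr (_ + _); apply: eq_bigr => j _.
  by have -> : split (lshift m2 j) = inl j := unsplitK (inl j).
by have -> : split (rshift m1 j) = inr j := unsplitK (inr j).
Qed.

Lemma PbarZ s X c (v : Pt K s X) : Pbar v -> Pbar (scalev c v).
Proof.
move=> [v0 [m [c1 [a [a_sum0 def_v]]]]]; split.
  by move=> X0; rewrite v0 //; apply/ffunP=> u; rewrite !ffunE mulr0.
exists m, (fun j => c * c1 j), a; split=> //.
by apply/ffunP=> u; rewrite def_v !ffunE mulr_sumr; apply: eq_bigr => j _; rewrite mulrA.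
Qed.

Lemma Pbar_sum s X (I : Type) (r : seq I) (P : pred I) (h : I -> Pt K s X) :
  (forall i, P i -> Pbar (h i)) -> Pbar (\sum_(i <- r | P i) h i).
Proof. by move=> Ph; apply: big_ind => //; [exact: Pbar0 | exact: PbarD]. Qed.

Lemma NatTrans_zero s t : NatTrans (fun X (_ : Pt K s X) => 0 : Pt K t X).
Proof.
split; first by move=> *; exact: Pbar0.
split; first by move=> *; rewrite addr0.
split; first by move=> X c _ _; apply/ffunP=> u; rewrite !ffunE mulr0.
by move=> X Y f _ _; rewrite Pmap0.
Qed.

Lemma NatTrans_map0 s t (F : forall X, Pt K s X -> Pt K t X) X :
  NatTrans F -> F X 0 = 0.
Proof.
move=> [_ [F_add _]]; have := F_add X 0 0 (Pbar0 _ _) (Pbar0 _ _).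
by rewrite addr0 => F00; apply: (addrI (F X 0)); rewrite addr0 -F00.
Qed.

Lemma NatTrans_sum s t (F : forall X, Pt K s X -> Pt K t X) X
   (I : Type) (r : seq I) (P : pred I) (h : I -> Pt K s X) :
  NatTrans F -> (forall i, P i -> Pbar (h i)) ->
  F X (\sum_(i <- r | P i) h i) = \sum_(i <- r | P i) F X (h i).
Proof.
move=> NF Ph; elim: r => [|x r IHr]; first by rewrite !big_nil (NatTrans_map0 X NF).
rewrite !big_cons; case: ifP => Px //.
by case: NF => [_ [F_add _]]; rewrite F_add ?IHr //; [exact: Ph | exact: Pbar_sum].
Qed.

End PbarModule.

Section Generator.
Variable K : fieldType.
Implicit Types (Y : finType) (s t n : nat).

Definition gset s : finType := option ('I_s * bool).

Definition gdiff s (i : 'I_s) : {ffun gset s -> K} :=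
  [ffun x => (x == Some (i, true))%:R - (x == Some (i, false))%:R].

Definition gtensor s : Pt K s (gset s) :=
  [ffun u : {ffun 'I_s -> gset s} => \prod_(i < s) gdiff i (u i)].

Lemma sum_gdiff s (i : 'I_s) : \sum_(x : gset s) gdiff i x = 0.
Proof. by under eq_bigr do rewrite ffunE; rewrite sumrB !sumr_indicator subrr. Qed.

Lemma Pbar_gtensor s : Pbar (gtensor s).
Proof.
split; first by move=> S0; case: (fintype0 (None : gset s) S0).
exists 1%N, (fun _ => 1), (fun _ i => gdiff i); split; first by move=> _ i; exact: sum_gdiff.
by apply/ffunP=> u; rewrite !ffunE big_ord1 mul1r.
Qed.

Lemma sumr_gdiff s Y (f : gset s -> Y) (i : 'I_s) (y : Y) :
  \sum_(x : gset s) (f x == y)%:R * gdiff i x =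
  (f (Some (i, true)) == y)%:R - (f (Some (i, false)) == y)%:R.
Proof.
under eq_bigr do rewrite ffunE mulrBr.
by rewrite sumrB !(sumr_mul_indicator (fun x => (f x == y)%:R)).
Qed.

Definition gmap s Y (y0 : Y) (g : {ffun 'I_s -> Y}) (x : gset s) : Y :=
  if x is Some (i, true) then g i else y0.

Lemma Pmap_gmap_gtensor s Y (y0 : Y) g :
  Pmap (gmap y0 g) (gtensor s) =
  [ffun w : {ffun 'I_s -> Y} => \prod_(i < s) ((g i == w i)%:R - (y0 == w i)%:R)].
Proof.
rewrite /gtensor Pmap_tensor; apply/ffunP=> w; rewrite !ffunE.
by apply: eq_bigr => i _; rewrite sumr_gdiff.
Qed.

Lemma Pbar_Pmap_gtensor s Y (y0 : Y) g : Pbar (Pmap (gmap y0 g) (gtensor s)).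
Proof.
split; first by move=> Y0; case: (fintype0 y0 Y0).
exists 1%N, (fun _ => 1), (fun _ i => [ffun y => (y == g i)%:R - (y == y0)%:R]); split.
  by move=> _ i; under eq_bigr do rewrite ffunE; rewrite sumrB !sumr_indicator subrr.
rewrite Pmap_gmap_gtensor; apply/ffunP => w; rewrite !ffunE big_ord1 mul1r.
by apply: eq_bigr => i _; rewrite ffunE ![w i == _]eq_sym.
Qed.

Definition gcomb s n Y (y0 : Y) m (c : 'I_m -> K) (a : 'I_m -> 'I_s -> {ffun Y -> K})
    (w : Pt K n (gset s)) : Pt K n Y :=
  \sum_(j < m) \sum_(g : {ffun 'I_s -> Y})
     scalev (c j * \prod_(i < s) a j i (g i)) (Pmap (gmap y0 g) w).

(* Since each a j i has sum 0, it equals \sum_y a j i y ([y] - [y0]). *)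
Lemma gcomb_gtensor s Y (y0 : Y) m c (a : 'I_m -> 'I_s -> {ffun Y -> K}) :
  (forall j i, \sum_y a j i y = 0) ->
  gcomb y0 c a (gtensor s) =
  [ffun u : {ffun 'I_s -> Y} => \sum_(j < m) c j * \prod_(i < s) a j i (u i)].
Proof.
move=> a_sum0; apply/ffunP=> u; rewrite sum_ffunE ffunE; apply: eq_bigr => j _.
rewrite sum_ffunE.
under eq_bigr do rewrite scalevE Pmap_gmap_gtensor ffunE -mulrA -big_split /=.
rewrite -mulr_sumr -(bigA_distr_bigA (fun i y => a j i y * ((y == u i)%:R - (y0 == u i)%:R))).
congr (_ * _); apply: eq_bigr => i _.
under eq_bigr do rewrite mulrBr.
by rewrite sumrB -mulr_suml a_sum0 mul0r subr0 sumr_mul_indicator.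
Qed.

Lemma NatTrans_gcomb s n (F : forall X, Pt K s X -> Pt K n X) Y (y0 : Y) m c
   (a : 'I_m -> 'I_s -> {ffun Y -> K}) : NatTrans F ->
  F Y (gcomb y0 c a (gtensor s)) = gcomb y0 c a (F _ (gtensor s)).
Proof.
move=> NF; have Pbar_g g := Pbar_Pmap_gtensor y0 g.
rewrite /gcomb NatTrans_sum //; last first.
  by move=> j _; apply: Pbar_sum => g _; exact: PbarZ.
apply: eq_bigr => j _; rewrite NatTrans_sum //; last by move=> g _; exact: PbarZ.
apply: eq_bigr => g _; case: (NF) => [_ [_ [F_scale F_nat]]].
by rewrite F_scale // F_nat //; exact: Pbar_gtensor.
Qed.

Lemma NatTrans_eq_gtensor s n (F G : forall X, Pt K s X -> Pt K n X) :
  NatTrans F -> NatTrans G -> F _ (gtensor s) = G _ (gtensor s) ->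
  forall Y (v : Pt K s Y), Pbar v -> F Y v = G Y v.
Proof.
move=> NF NG FG_gtensor Y v Pv.
have [y0 _ | Y0] := pickP (fun _ : Y => true).
  case: Pv => [_ [m [c [a [a_sum0 ->]]]]].
  by rewrite -(gcomb_gtensor y0 c a_sum0) !NatTrans_gcomb // FG_gtensor.
have cardY0 : #|Y| = 0%N by apply: eq_card0 => y; have := Y0 y.
case: NF NG => [PF _] [PG _].
by rewrite (proj1 (PF _ _ Pv)) // (proj1 (PG _ _ Pv)).
Qed.

End Generator.

Section BlockAlternating.
Variable K : fieldType.
Implicit Types (s t : nat).

Definition block s (x : gset s) : option 'I_s := omap fst x.

Definition collapse s (i : 'I_s) (x : gset s) : gset s :=
  if x == Some (i, true) then Some (i, false) else x.

Definition swap_sign s (i : 'I_s) (x : gset s) : gset s :=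
  if x == Some (i, true) then Some (i, false)
  else if x == Some (i, false) then Some (i, true) else x.

Definition block_alternating s t (z : Pt K t (gset s)) : Prop :=
  (forall i (u : {ffun 'I_t -> gset s}), (forall j, block (u j) != Some i) -> z u = 0) /\
  (forall i (u : {ffun 'I_t -> gset s}), z [ffun j => swap_sign i (u j)] = - z u).

Lemma SomeE s (i j : 'I_s) (b c : bool) :
  (Some (i, b) == Some (j, c) :> gset s) = (i == j) && (b == c).
Proof. by []. Qed.

Lemma swap_signK s (i : 'I_s) : involutive (swap_sign i).
Proof.
move=> x; rewrite /swap_sign.
case: (x =P Some (i, true)) => [->|x_neq_t]; first by rewrite SomeE andbF eqxx.
case: (x =P Some (i, false)) => [->|x_neq_f]; first by rewrite eqxx.
by rewrite (introF eqP x_neq_t) (introF eqP x_neq_f).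
Qed.

Lemma swap_sign_true s (i : 'I_s) : swap_sign i (Some (i, true)) = Some (i, false).
Proof. by rewrite /swap_sign eqxx. Qed.

Lemma swap_sign_out s (i k : 'I_s) b : k != i -> swap_sign i (Some (k, b)) = Some (k, b).
Proof. by move=> /negbTE k_neq_i; rewrite /swap_sign !SomeE k_neq_i. Qed.

Lemma gdiff_swap_sign s (i k : 'I_s) x :
  gdiff K k (swap_sign i x) = if k == i then - gdiff K k x else gdiff K k x.
Proof.
rewrite !ffunE !(inv_eq (swap_signK i)).
case: (k =P i) => [->|/eqP k_neq_i]; last by rewrite !swap_sign_out.
by rewrite swap_sign_true /swap_sign SomeE andbF eqxx opprB.
Qed.

Lemma Pmap_collapse_gtensor s (i : 'I_s) : Pmap (collapse i) (gtensor K s) = 0.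
Proof.
rewrite /gtensor Pmap_tensor; apply/ffunP=> w; rewrite !ffunE (bigD1 i) //= sumr_gdiff.
by rewrite /collapse eqxx SomeE andbF subrr mul0r.
Qed.

Lemma Pmap_swap_sign_gtensor s (i : 'I_s) :
  Pmap (swap_sign i) (gtensor K s) = scalev (-1) (gtensor K s).
Proof.
apply/ffunP=> w; rewrite (Pmap_involutive _ _ (swap_signK i)) /gtensor /scalev !ffunE.
rewrite (bigD1 i) //= [in RHS](bigD1 i) //= (ffunE (fun j => swap_sign i (w j))).
rewrite gdiff_swap_sign eqxx mulN1r -mulNr; congr (_ * _); apply: eq_bigr => k /negbTE k_neq_i.
by rewrite (ffunE (fun j => swap_sign i (w j))) gdiff_swap_sign k_neq_i.
Qed.

Lemma Pmap_collapse_avoid s t (i : 'I_s) (z : Pt K t (gset s)) (u : {ffun 'I_t -> gset s}) :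
  (forall j, block (u j) != Some i) -> Pmap (collapse i) z u = z u.
Proof.
move=> u_avoid; rewrite PmapE (big_pred1 u) // => u' /=.
have collapse_u j : collapse i (u j) = u j.
  by rewrite /collapse; case: eqP => // u_j; move: (u_avoid j); rewrite u_j /= eqxx.
apply/eqP/eqP => [u'_u|->]; last by apply/ffunP=> j; rewrite ffunE collapse_u.
apply/ffunP => j; move/ffunP/(_ j): u'_u; rewrite ffunE /collapse.
by case: eqP => [_ u_j | _ //]; move: (u_avoid j); rewrite -u_j /= eqxx.
Qed.

Lemma NatTrans_gtensor_alternating s t (F : forall X, Pt K s X -> Pt K t X) :
  NatTrans F -> block_alternating (F _ (gtensor K s)).
Proof.
move=> NF; have [_ [_ [F_scale F_nat]]] := NF; split.
  move=> i u u_avoid; rewrite -(Pmap_collapse_avoid _ u_avoid) -F_nat; last exact: Pbar_gtensor.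
  by rewrite Pmap_collapse_gtensor (NatTrans_map0 _ NF) ffunE.
move=> i u; rewrite -(Pmap_involutive _ u (swap_signK i)) -F_nat; last exact: Pbar_gtensor.
by rewrite Pmap_swap_sign_gtensor F_scale ?scalevE ?mulN1r //; exact: Pbar_gtensor.
Qed.

Lemma block_alternatingB s t (z1 z2 : Pt K t (gset s)) :
  block_alternating z1 -> block_alternating z2 -> block_alternating (z1 - z2).
Proof.
move=> [z1_avoid z1_swap] [z2_avoid z2_swap]; split=> [i u u_avoid | i u].
  by rewrite !ffunE (z1_avoid i) // (z2_avoid i) // subrr.
by rewrite !ffunE z1_swap z2_swap opprD.
Qed.

Lemma block_avoid_or_section s t (u : {ffun 'I_t -> gset s}) :
  (exists i, forall j, block (u j) != Some i) \/
  exists2 rho : 'I_s -> 'I_t, injective rho & forall i, block (u (rho i)) = Some i.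
Proof.
have [i /forallP avoid_i | meets] := pickP (fun i => [forall j, block (u j) != Some i]).
  by left; exists i.
right; have: forall i : 'I_s, exists j, block (u j) == Some i.
  by move=> i; move/negbT: (meets i); rewrite negb_forall => /existsP [j]; rewrite negbK; exists j.
case/fin_all_exists => rho rhoP; exists rho => [i1 i2 rho12|i]; last exact/eqP.
by move: (rhoP i1); rewrite rho12 (eqP (rhoP i2)) => /eqP [].
Qed.

Lemma block_alternating_eq0_lt s t (z : Pt K t (gset s)) :
  (t < s)%N -> block_alternating z -> z = 0.
Proof.
move=> lt_ts [z_avoid _]; apply/ffunP => u; rewrite ffunE.
have [[i u_avoid] | [rho rho_inj _]] := block_avoid_or_section u; first exact: z_avoid u_avoid.
by have := leq_card rho rho_inj; rewrite !card_ord leqNgt lt_ts.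
Qed.

(* Induction on the positions carrying a -, each removed by one sign swap. *)
Lemma block_alternating_signs_eq0 s t (z : Pt K t (gset s)) (p : 'I_t -> 'I_s) :
  injective p -> block_alternating z -> z [ffun j => Some (p j, true)] = 0 ->
  forall b : 'I_t -> bool, z [ffun j => Some (p j, b j)] = 0.
Proof.
move=> p_inj [_ z_swap] z_plus b.
have: forall j, j \notin enum 'I_t -> b j by move=> j; rewrite mem_enum.
elim: (enum 'I_t) b => [|j0 r IHr] b b_plus.
  by rewrite -z_plus; congr (z _); apply/ffunP => j; rewrite !ffunE b_plus.
pose b' j := (j == j0) || b j.
have b'_plus j : j \notin r -> b' j.
  rewrite /b'; case: eqP => //= /eqP j_neq_j0 j_r.
  by apply: b_plus; rewrite in_cons negb_or j_neq_j0.
have [b_j0 | b_j0] := boolP (b j0).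
  rewrite -(IHr b' b'_plus); congr (z _); apply/ffunP => j; rewrite !ffunE /b'.
  by case: eqP => // ->; rewrite b_j0.
have -> : [ffun j => Some (p j, b j)] =
          [ffun j => swap_sign (p j0) ([ffun j => Some (p j, b' j)] j)] :> {ffun 'I_t -> gset s}.
  apply/ffunP=> j; rewrite !ffunE /b'; case: (j =P j0) => [->|/eqP j_neq_j0].
    by rewrite (negbTE b_j0) swap_sign_true.
  by rewrite swap_sign_out // (inj_eq p_inj).
by rewrite z_swap IHr // oppr0.
Qed.

Lemma block_alternating_eq0_perm t (z : Pt K t (gset t)) : block_alternating z ->
  (forall sg : {perm 'I_t}, z [ffun j => Some (sg j, true)] = 0) -> z = 0.
Proof.
move=> z_alt z_perm; apply/ffunP => u; rewrite ffunE.
have [[i u_avoid] | [rho rho_inj rhoP]] := block_avoid_or_section u.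
  exact: z_alt.1 _ _ u_avoid.
pose sg := ((perm rho_inj)^-1)%g.
have block_u j : block (u j) = Some (sg j).
  by rewrite -{1}(permKV (perm rho_inj) j) permE rhoP.
pose b j := if u j is Some (_, b) then b else true.
have -> : u = [ffun j => Some (sg j, b j)] :> {ffun 'I_t -> gset t}.
  by apply/ffunP => j; rewrite ffunE /b; move: (block_u j); case: (u j) => [[k c]|] //= [->].
exact: block_alternating_signs_eq0 perm_inj z_alt (z_perm sg) b.
Qed.

End BlockAlternating.

Section PlacePermutations.
Variable K : fieldType.
Implicit Types (X Y : finType) (t : nat).

Lemma PhiE t (a : {ffun {perm 'I_t} -> K}) X (v : Pt K t X) w :
  Phi a v w = \sum_(sg : {perm 'I_t}) a sg * v [ffun i => w ((sg^-1)%g i)].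
Proof. by rewrite /Phi sum_ffunE; apply: eq_bigr => sg _; rewrite !ffunE. Qed.

Lemma Pbar_act t X (sg : {perm 'I_t}) (v : Pt K t X) : Pbar v -> Pbar (act sg v).
Proof.
move=> [v0 [m [c [a [a_sum0 def_v]]]]]; split.
  by move=> X0; apply/ffunP => w; rewrite /act ffunE v0 // !ffunE.
exists m, c, (fun j i => a j (sg i)); split; first by move=> j i; exact: a_sum0.
apply/ffunP=> w; rewrite /act def_v !ffunE; apply: eq_bigr => j _; congr (_ * _).
rewrite (reindex_inj (@perm_inj _ sg)) /=; apply: eq_bigr => i _.
by rewrite ffunE permK.
Qed.

Lemma NatTrans_Phi t (a : {ffun {perm 'I_t} -> K}) : NatTrans (Phi a).
Proof.
split; first by move=> X v Pv; apply: Pbar_sum => sg _; apply/PbarZ/Pbar_act.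
split.
  move=> X v w _ _; apply/ffunP=> u; rewrite ffunE !PhiE -big_split.
  by apply: eq_bigr => sg _; rewrite ffunE mulrDr.
split.
  move=> X c v _; apply/ffunP=> u; rewrite scalevE !PhiE mulr_sumr.
  by apply: eq_bigr => sg _; rewrite scalevE mulrCA.
move=> X Y f v _; apply/ffunP=> w; rewrite PhiE PmapE.
under [RHS]eq_bigr do rewrite PhiE.
rewrite exchange_big /=; apply: eq_bigr => sg _; rewrite PmapE mulr_sumr.
rewrite [RHS](reindex (fun u : {ffun 'I_t -> X} => [ffun i => u (sg i)])); last first.
  apply: onW_bij; exists (fun u : {ffun 'I_t -> X} => [ffun i => u ((sg^-1)%g i)]) => u;
  by apply/ffunP=> i; rewrite !ffunE ?permK ?permKV.
apply: eq_big => [u|u _]; last by congr (_ * v _); apply/ffunP=> i; rewrite !ffunE permKV.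
apply/eqP/eqP => fu_w; apply/ffunP => i; rewrite !ffunE.
  by move/ffunP: fu_w => /(_ (sg i)); rewrite !ffunE permK.
by rewrite -fu_w !ffunE permKV.
Qed.

Lemma Phi_one t X (v : Pt K t X) : Phi (galg_one K t) v = v.
Proof.
apply/ffunP=> w; rewrite PhiE (bigD1 1%g) //= ffunE eqxx mul1r big1 ?addr0.
  by congr (v _); apply/ffunP=> i; rewrite ffunE invg1 perm1.
by move=> sg /negbTE sg_neq1; rewrite ffunE sg_neq1 mul0r.
Qed.

Lemma Phi_mul t (a b : {ffun {perm 'I_t} -> K}) X (v : Pt K t X) :
  Phi (galg_mul a b) v = Phi a (Phi b v).
Proof.
apply/ffunP=> w; rewrite !PhiE.
under eq_bigr do rewrite ffunE mulr_suml.
under eq_bigr do under eq_bigr do rewrite mulr_suml.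
rewrite exchange_big /=; apply: eq_bigr => h _.
rewrite exchange_big /= PhiE mulr_sumr; apply: eq_bigr => k _.
rewrite (bigD1 (h * k)%g) //= eqxx big1 ?addr0; last first.
  by move=> g g_neq; rewrite eq_sym (negbTE g_neq) mul0r.
rewrite -mulrA; congr (_ * (_ * v _)); apply/ffunP=> i.
by rewrite !ffunE invMg permM.
Qed.

Lemma gtensor_plus t (p : 'I_t -> 'I_t) :
  gtensor K t [ffun i => Some (p i, true)] = \prod_(i < t) (p i == i)%:R.
Proof.
rewrite ffunE; apply: eq_bigr => i _.
by rewrite !ffunE !SomeE /= andbT andbF subr0.
Qed.

Lemma Phi_gtensor_perm t (a : {ffun {perm 'I_t} -> K}) (tau : {perm 'I_t}) :
  Phi a (gtensor K t) [ffun j => Some (tau j, true)] = a tau.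
Proof.
have perm_tuple (sg : {perm 'I_t}) :
    [ffun i => [ffun j => Some (tau j, true)] ((sg^-1)%g i)] =
    [ffun i => Some (tau ((sg^-1)%g i), true)] :> {ffun 'I_t -> gset t}.
  by apply/ffunP => i; rewrite !ffunE.
rewrite PhiE (bigD1 tau) //= big1 ?addr0 => [|sg sg_neq_tau].
  by rewrite perm_tuple gtensor_plus big1 ?mulr1 // => i _; rewrite permKV eqxx.
have [j sgj_neq] : exists j, sg j != tau j.
  apply/existsP; apply: contraR sg_neq_tau; rewrite negb_exists => /forallP sg_tau.
  by apply/eqP/permP => j; apply/eqP; rewrite -[_ == _]negbK.
by rewrite perm_tuple gtensor_plus (bigD1 (sg j)) //= permK eq_sym (negbTE sgj_neq) mul0r mulr0.
Qed.

End PlacePermutations.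

Section Hom.
Variable K : fieldType.

Lemma NatTrans_eq0_lt s t (F : forall X : finType, Pt K s X -> Pt K t X) :
  (t < s)%N -> NatTrans F -> forall X (v : Pt K s X), Pbar v -> F X v = 0.
Proof.
move=> lt_ts NF; apply: (NatTrans_eq_gtensor NF (NatTrans_zero K s t)).
exact: block_alternating_eq0_lt lt_ts (NatTrans_gtensor_alternating NF).
Qed.

Lemma Phi_inj t (a : {ffun {perm 'I_t} -> K}) :
  (forall X (v : Pt K t X), Pbar v -> Phi a v = 0) -> a = 0.
Proof.
move=> Phi_a0; apply/ffunP => tau.
by rewrite -(Phi_gtensor_perm a tau) (Phi_a0 _ _ (Pbar_gtensor K t)) !ffunE.
Qed.

Lemma Phi_surj t (F : forall X : finType, Pt K t X -> Pt K t X) : NatTrans F ->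
  exists a, forall X (v : Pt K t X), Pbar v -> F X v = Phi a v.
Proof.
move=> NF; pose a : {ffun {perm 'I_t} -> K} :=
  [ffun tau : {perm 'I_t} => F _ (gtensor K t) [ffun j => Some (tau j, true) : gset t]].
exists a; apply: (NatTrans_eq_gtensor NF (NatTrans_Phi a)); apply/eqP; rewrite -subr_eq0.
apply/eqP/block_alternating_eq0_perm.
  by apply: block_alternatingB; apply: NatTrans_gtensor_alternating; last exact: NatTrans_Phi.
by move=> sg; rewrite !ffunE Phi_gtensor_perm ffunE subrr.
Qed.

End Hom.

Unset Implicit Arguments.

Theorem mainTheorem2 (K : fieldType) (s t : nat) :
  ((t < s)%N ->
     forall F : forall X : finType, Pt K s X -> Pt K t X,
       NatTrans F -> forall (X : finType) (v : Pt K s X), Pbar v -> F X v = 0)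
  /\
  ((forall a, NatTrans (Phi (K := K) (t := t) a)) /\
   (forall X (v : Pt K t X), Pbar v -> Phi (galg_one K t) v = v) /\
   (forall a b X (v : Pt K t X), Pbar v ->
      Phi (galg_mul a b) v = Phi a (Phi b v)) /\
   (forall a, (forall X (v : Pt K t X), Pbar v -> Phi a v = 0) -> a = 0) /\
   (forall F : forall X : finType, Pt K t X -> Pt K t X, NatTrans F ->
      exists a, forall X (v : Pt K t X), Pbar v -> F X v = Phi a v)).
Proof.
split; first by move=> lt_ts F; exact: NatTrans_eq0_lt.
split; first exact: NatTrans_Phi.
split; first by move=> X v _; exact: Phi_one.
split; first by move=> a b X v _; exact: Phi_mul.
split; [exact: Phi_inj | exact: Phi_surj].
Qed.
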